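(* Let $(f,I,U)$ be a safety verification problem that is robustly safe with robustness margin $\mu>0$, with $\overline{I}\cap\overline{U}=\emptyset$ and $\mathbb{R}^n\setminus U$ bounded, and let $V$ be a $\mu$-robust safety certificate of $(f,I,U)$. Define $\nu: R^{\mathbb{R}}_f(\partial\overline{V})\to\mathbb{R}$ by $\nu(x):=-t$, where $t$ is the unique $t\in\mathbb{R}$ with $\varphi_f(x,t)\in\partial\overline{V}$. Then there is an open neighborhood of $\partial\overline{V}$, contained in the domain of $\nu$, on which $\nu$ is continuous.
   Context: A safety verification problem is a triple $(f,I,U)$ with $f:\mathbb{R}^n\to\mathbb{R}^n$ smooth, $I,U\subseteq\mathbb{R}^n$. Convention: the flow $\varphi_f(x,t)$ of $\dot x=f(x)$ (the state reached at time $t\in\mathbb{R}$ from $x$; negative $t$ allowed) is defined for all $x$, $t$. For $X\subseteq\mathbb{R}^n$, $R^{\mathbb{R}}_f(X)=\{\varphi_f(x,t)\mid x\in X,\ t\in\mathbb{R}\}$. $\partial\overline{V}$ denotes the boundary of the closure of $V$. Under the hypotheses, for every $x\in R^{\mathbb{R}}_f(\partial\overline{V})$ there is exactly one $t\in\mathbb{R}$ with $\varphi_f(x,t)\in\partial\overline{V}$, so $\nu$ is well defined. For $\varepsilon\ge 0$, an $\varepsilon$-solution of $\dot x=f(x)$ is a differentiable function $x:\mathbb{R}^{\ge0}\to\mathbb{R}^n$ with $\|f(x(t))-\dot x(t)\|\le\varepsilon$ for all $t\ge0$. For $X\subseteq\mathbb{R}^n$, $T\subseteq\mathbb{R}^{\ge0}$: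 $R^{T}_{f,\varepsilon}(X)=\{x(t)\mid t\in T,\ x\text{ an }\varepsilon\text{-solution with }x(0)\in X\}$, $R_{f,\varepsilon}(X)=R^{\mathbb{R}^{\ge0}}_{f,\varepsilon}(X)$. Robustly safe with robustness margin $\mu>0$ means $R_{f,\mu}(I)\cap U=\emptyset$. A $\mu$-robust safety certificate is a set $V$ with $I\subseteq V$, $R_{f,\mu}(V)\subseteq V$, $V\cap U=\emptyset$. *)

From Stdlib Require Import Reals.
From mathcomp Require Import ssreflect ssrfun ssrbool eqtype ssrnat fintype bigop.

Set Implicit Arguments.
Unset Strict Implicit.

Open Scope R_scope.

Definition vec (n : nat) : Type := 'I_n -> R.

Definition vadd {n} (x y : vec n) : vec n := fun i => x i + y i.
Definition vsub {n} (x y : vec n) : vec n := fun i => x i - y i.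
Definition vscal {n} (a : R) (x : vec n) : vec n := fun i => a * x i.
Definition ebasis {n} (i : 'I_n) : vec n := fun j => if j == i then 1 else 0.

Definition vnorm {n} (x : vec n) : R :=
  sqrt (\big[Rplus/0]_(i < n) (x i * x i)).

Definition set_ (n : nat) := vec n -> Prop.

Definition is_open {n} (S : set_ n) : Prop :=
  forall x, S x -> exists r, 0 < r /\ forall y, vnorm (vsub y x) < r -> S y.

Definition sclosure {n} (S : set_ n) : set_ n :=
  fun x => forall r, 0 < r -> exists y, S y /\ vnorm (vsub y x) < r.

Definition setC_ {n} (S : set_ n) : set_ n := fun x => ~ S x.

Definition sboundary {n} (S : set_ n) : set_ n :=
  fun x => sclosure S x /\ sclosure (setC_ S) x.

Definition sbounded {n} (S : set_ n) : Prop :=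
  exists M, forall x, S x -> vnorm x <= M.

Definition sdisjoint {n} (A B : set_ n) : Prop := forall x, A x -> B x -> False.

Definition ssubset {n} (A B : set_ n) : Prop := forall x, A x -> B x.

(** Smoothness of f : R^n -> R^n.  [Ck k g] : the scalar function g is
    continuous and has partial derivatives (everywhere) of all orders <= k,
    all of them continuous. *)
Definition cont_fun {n} (g : vec n -> R) : Prop :=
  forall x eps, 0 < eps -> exists delta, 0 < delta /\
    forall y, vnorm (vsub y x) < delta -> Rabs (g y - g x) < eps.

Fixpoint Ck {n} (k : nat) (g : vec n -> R) : Prop :=
  match k with
  | O => cont_fun g
  | S k' => cont_fun g /\
      forall i : 'I_n, exists dg : vec n -> R,
        (forall x, derivable_pt_lim (fun s => g (vadd x (vscal s (ebasis i)))) 0 (dg x))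
        /\ Ck k' dg
  end.

Definition smooth {n} (f : vec n -> vec n) : Prop :=
  forall (j : 'I_n) (k : nat), Ck k (fun x => f x j).

Definition is_flow {n} (f : vec n -> vec n) (phi : vec n -> R -> vec n) : Prop :=
  forall x, phi x 0 = x /\
    forall (t : R) (j : 'I_n), derivable_pt_lim (fun s => phi x s j) t (f (phi x t) j).

Definition flow_reach {n} (phi : vec n -> R -> vec n) (X : set_ n) : set_ n :=
  fun y => exists x t, X x /\ y = phi x t.

(** derivative of g : R>=0 -> R at t >= 0 (one-sided at t = 0) *)
Definition deriv_nonneg (g : R -> R) (t l : R) : Prop :=
  forall eps, 0 < eps -> exists delta, 0 < delta /\
    forall h, h <> 0 -> 0 <= t + h -> Rabs h < delta ->
      Rabs ((g (t + h) - g t) / h - l) < eps.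

(** eps-solution of x' = f(x): a differentiable x : R>=0 -> R^n (values at
    negative times are irrelevant) with ||f(x(t)) - x'(t)|| <= eps, t >= 0. *)
Definition eps_solution {n} (f : vec n -> vec n) (eps : R) (x : R -> vec n) : Prop :=
  forall t, 0 <= t -> exists v : vec n,
    (forall j, deriv_nonneg (fun s => x s j) t (v j)) /\
    vnorm (vsub (f (x t)) v) <= eps.

Definition eps_reach {n} (f : vec n -> vec n) (eps : R) (X : set_ n) : set_ n :=
  fun y => exists (x : R -> vec n) (t : R),
    eps_solution f eps x /\ X (x 0) /\ 0 <= t /\ y = x t.

Definition robustly_safe {n} (f : vec n -> vec n) (I U : set_ n) (mu : R) : Prop :=
  0 < mu /\ sdisjoint (eps_reach f mu I) U.

Definition robust_certificate {n} (f : vec n -> vec n) (I U : set_ n) (mu : R)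
  (V : set_ n) : Prop :=
  ssubset I V /\ ssubset (eps_reach f mu V) V /\ sdisjoint V U.

Definition cont_on {n} (W : set_ n) (nu : vec n -> R) : Prop :=
  forall x, W x -> forall eps, 0 < eps -> exists delta, 0 < delta /\
    forall y, W y -> vnorm (vsub y x) < delta -> Rabs (nu y - nu x) < eps.

(* Invariance of the certificate [V] under all [mu]-solutions forces the flow to carry the
   closure of [V] into its interior in any positive time: a point of [V] close to [z] can be
   steered onto any point close to [phi z t] by a [mu]-solution that follows a nearby trajectory
   and absorbs the initial error through a C^1 cut-off.  Hence an orbit meets the boundary of the
   closure at most once, lying outside the closure before and in the interior after.  Both
   conditions are open in the initial point by continuous dependence on initial data (the smooth
   field is locally Lipschitz), so the orbits through the boundary form an open set, and on it the
   crossing time is squeezed between the times of these two open conditions. *)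

From Stdlib Require Import Reals Lra FunctionalExtensionality Classical.
From HB Require Import structures.
From mathcomp Require Import ssreflect ssrfun ssrbool eqtype ssrnat fintype bigop seq.

Set Implicit Arguments.
Unset Strict Implicit.

Open Scope R_scope.

HB.instance Definition _ := Monoid.isComLaw.Build R 0 Rplus
  (fun a b c => esym (Rplus_assoc a b c)) Rplus_comm Rplus_0_l.

Lemma big_Rplus_le_const n (F : 'I_n -> R) c :
  (forall i, F i <= c) -> \big[Rplus/0]_(i < n) F i <= INR n * c.
Proof.
elim: n F => [|n IHn] F F_le; first by rewrite big_ord0 /=; lra.
rewrite big_ord_recr S_INR /=.
have := IHn (fun i => F (widen_ord (leqnSn n) i)) (fun i => F_le _).
have := F_le ord_max; move: (\big[Rplus/0]_(i < n) _) => s; lra.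
Qed.

Lemma big_Rplus_ge_term n (F : 'I_n -> R) i :
  (forall j, 0 <= F j) -> F i <= \big[Rplus/0]_(j < n) F j.
Proof.
move=> F_ge0; rewrite (bigD1 i) //=.
have : 0 <= \big[Rplus/0]_(j < n | j != i) F j.
  by apply: big_ind => //; [lra | move=> *; lra].
move: (\big[Rplus/0]_(j < n | j != i) F j) => s; lra.
Qed.

(* [vnorm x <= Kdim n * max_i |x i|]; the [+ 1] keeps [Kdim 0] positive. *)
Definition Kdim (n : nat) : R := INR n + 1.

Lemma Kdim_gt0 n : 0 < Kdim n.
Proof. rewrite /Kdim; have := pos_INR n; lra. Qed.

Lemma Rabs_coord_le_vnorm n (x : vec n) i : Rabs (x i) <= vnorm x.
Proof.
rewrite /vnorm -sqrt_Rsqr_abs; apply: sqrt_le_1_alt.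
by apply: (big_Rplus_ge_term (F := fun j => x j * x j)) => j; nra.
Qed.

Lemma vnorm_le_coord n (x : vec n) c :
  0 <= c -> (forall i, Rabs (x i) <= c) -> vnorm x <= Kdim n * c.
Proof.
move=> c_ge0 x_le; have K_gt0 := Kdim_gt0 n.
rewrite /vnorm -(sqrt_Rsqr (Kdim n * c)); last by nra.
apply: sqrt_le_1_alt; apply: Rle_trans (big_Rplus_le_const (c := c * c) _) _.
  by move=> j; have := x_le j; split_Rabs; nra.
rewrite /Rsqr /Kdim; have := pos_INR n; nra.
Qed.

Lemma vnorm_ge0 n (x : vec n) : 0 <= vnorm x.
Proof. exact: sqrt_pos. Qed.

Lemma vnorm_vsub_diag n (x : vec n) : vnorm (vsub x x) = 0.
Proof.
apply: Rle_antisym; last exact: vnorm_ge0.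
have := vnorm_le_coord (x := vsub x x) (Rle_refl 0).
by rewrite Rmult_0_r; apply=> i; rewrite /vsub Rminus_diag Rabs_R0; lra.
Qed.

Definition box {n} (x p : vec n) (r : R) : Prop := forall i, Rabs (x i - p i) <= r.

Lemma vnorm_vsub_lt_coord n (x p : vec n) r :
  vnorm (vsub x p) < r -> forall i, Rabs (x i - p i) < r.
Proof.
move=> lt_r i; change (x i - p i) with (vsub x p i).
have := Rabs_coord_le_vnorm (vsub x p) i; lra.
Qed.

Lemma vnorm_vsub_lt n (x p : vec n) r : 0 < r ->
  (forall i, Rabs (x i - p i) < r / (2 * Kdim n)) -> vnorm (vsub x p) < r.
Proof.
move=> r_gt0 xp_lt; have K_gt0 := Kdim_gt0 n.
have c_gt0 : 0 < r / (2 * Kdim n) by apply: Rdiv_lt_0_compat; lra.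
have := vnorm_le_coord (x := vsub x p) (Rlt_le _ _ c_gt0) (fun i => Rlt_le _ _ (xp_lt i)).
by rewrite (_ : Kdim n * (r / (2 * Kdim n)) = r / 2); [lra | field; lra].
Qed.

Lemma Rabs_sub_triang (a b c : R) : Rabs (a - c) <= Rabs (a - b) + Rabs (b - c).
Proof. by replace (a - c) with ((a - b) + (b - c)) by ring; apply: Rabs_triang. Qed.

Lemma ord_common_delta n (P : 'I_n -> R -> Prop) :
  (forall j d d', P j d -> 0 < d' <= d -> P j d') ->
  (forall j, exists d, 0 < d /\ P j d) -> exists d, 0 < d /\ forall j, P j d.
Proof.
move=> P_mono P_ex.
suff [d [d_gt0 Pd]] : exists d, 0 < d /\ forall j, j \in enum 'I_n -> P j d.
  by exists d; split=> // j; apply: Pd; rewrite mem_enum.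
elim: (enum 'I_n) => [|a l [d [d_gt0 Pd]]]; first by exists 1; split; [lra |].
have [da [da_gt0 Pa]] := P_ex a.
have m_gt0 : 0 < Rmin d da by apply: Rmin_pos.
exists (Rmin d da); split=> // j; rewrite in_cons => /orP [/eqP -> | j_l].
  by apply: P_mono Pa _; split=> //; apply: Rmin_r.
by apply: P_mono (Pd _ j_l) _; split=> //; apply: Rmin_l.
Qed.

Lemma real_induction (a b : R) (P : R -> Prop) : a <= b -> P a ->
  (forall s, a <= s <= b -> (forall t, a <= t < s -> P t) ->
     exists d, 0 < d /\ forall t, s <= t < s + d -> P t) ->
  forall t, a <= t <= b -> P t.
Proof.
move=> ab Pa step.
pose E x := a <= x <= b /\ forall t, a <= t <= x -> P t.
have Ea : E a by split=> [| t t_a]; [lra | have -> : t = a by lra].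
have [s [s_ub s_lub]] := completeness E (ex_intro _ b (fun x Ex => proj2 (proj1 Ex)))
  (ex_intro _ a Ea).
have as_ : a <= s by apply: s_ub.
have sb : s <= b by apply: s_lub => x [[_ ?] _].
have P_lt_s : forall t, a <= t < s -> P t.
  move=> t t_as; apply: NNPP => nPt.
  suff : s <= t by lra.
  apply: s_lub => x Ex; apply: Rnot_lt_le => xt.
  by apply: nPt; apply: (proj2 Ex); lra.
have [d [d_gt0 P_right]] := step s (conj as_ sb) P_lt_s.
pose m := Rmin b (s + d / 2).
have Em : E m.
  split; first by split; [apply: Rmin_glb; lra | apply: Rmin_l].
  move=> t t_am; case: (Rlt_le_dec t s) => ts; first by apply: P_lt_s; lra.
  by apply: P_right; have := Rmin_r b (s + d / 2); rewrite -/m; lra.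
have m_le_s := s_ub _ Em.
have m_b : m = b by move: m_le_s; rewrite /m /Rmin; case: Rle_dec; lra.
by move=> t t_ab; apply: (proj2 Em); rewrite m_b.
Qed.

Lemma MVT_abs_bound (g g' : R -> R) a b M : a <= b ->
  (forall s, a <= s <= b -> derivable_pt_lim g s (g' s)) ->
  (forall s, a < s < b -> Rabs (g' s) <= M) -> Rabs (g b - g a) <= M * (b - a).
Proof.
move=> ab g_der g'_le; case: (Req_dec a b) => [<- | a_neq_b].
  by rewrite !Rminus_diag Rabs_R0; lra.
have [c [-> c_ab]] := MVT_cor2 g g' a b ltac:(lra) g_der.
rewrite Rabs_mult (Rabs_right (b - a)); last lra.
by apply: Rmult_le_compat_r; [lra | apply: g'_le].
Qed.

Lemma le_of_le_add_div_pow2 x a b :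
  0 <= b -> (forall k, x <= a + b / 2 ^ k) -> x <= a.
Proof.
move=> b_ge0 x_le; apply: Rnot_lt_le => ax.
have pow2_ge k : INR k <= 2 ^ k.
  elim: k => [|k IHk]; first by simpl; lra.
  by rewrite S_INR /=; have := pow_R1_Rle 2 k; lra.
have [N N_gt] := INR_archimed (x - a) b ltac:(lra).
have := x_le N; have := pow2_ge N; have := pow_R1_Rle 2 N ltac:(lra).
move=> pow_ge1 pow_ge; rewrite /Rdiv; have := Rinv_r (2 ^ N) ltac:(lra); nra.
Qed.

Lemma derivable_pt_lim_deriv_nonneg (g : R -> R) t l :
  derivable_pt_lim g t l -> deriv_nonneg g t l.
Proof.
move=> g_der e e_gt0; have [d d_lim] := g_der e e_gt0.
by exists d; split=> [| h h_neq0 _]; [exact: cond_pos | exact: d_lim].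
Qed.

Lemma derivable_pt_lim_shift (g : R -> R) s t l :
  derivable_pt_lim g (t + s) l -> derivable_pt_lim (fun t => g (t + s)) t l.
Proof.
move=> g_der e e_gt0; have [d d_lim] := g_der e e_gt0.
exists d => h h_neq0 h_lt; have -> : t + h + s = t + s + h by ring.
exact: d_lim.
Qed.

Lemma derivable_pt_lim_of_shifted (g : R -> R) s l :
  derivable_pt_lim (fun h => g (s + h)) 0 l -> derivable_pt_lim g s l.
Proof.
move=> g_der e e_gt0; have [d d_lim] := g_der e e_gt0.
by exists d => h h_neq0 h_lt; have := d_lim h h_neq0 h_lt; rewrite Rplus_0_l Rplus_0_r.
Qed.

Lemma derivable_pt_lim_mirror (g : R -> R) t l :
  derivable_pt_lim g (- t) l -> derivable_pt_lim (fun t => g (- t)) t (- l).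
Proof. by move=> g_der; apply: derivable_pt_lim_mirr_fwd; rewrite Ropp_involutive. Qed.

Definition is_solution {n} (F : vec n -> vec n) (u : R -> vec n) : Prop :=
  forall t j, derivable_pt_lim (fun s => u s j) t (F (u t) j).

Definition lipschitz_on_box {n} (F : vec n -> vec n) (p : vec n) (r L : R) : Prop :=
  forall a b c, 0 <= c -> box a p r -> box b p r -> (forall i, Rabs (a i - b i) <= c) ->
    forall j, Rabs (F a j - F b j) <= L * c.

Definition locally_lipschitz {n} (F : vec n -> vec n) : Prop :=
  forall p, exists r L, 0 < r /\ 0 <= L /\ lipschitz_on_box F p r L.

Section Solutions.
Variables (n : nat) (F : vec n -> vec n).

Lemma solution_continuous u : is_solution F u -> forall t e, 0 < e ->
  exists d, 0 < d /\ forall t', Rabs (t' - t) < d -> forall j, Rabs (u t' j - u t j) < e.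
Proof.
move=> u_sol t e e_gt0.
suff [d [d_gt0 d_cont]] : exists d, 0 < d /\
    forall j t', Rabs (t' - t) < d -> Rabs (u t' j - u t j) < e.
  by exists d; split=> // t' t't j; apply: d_cont.
apply: ord_common_delta => [j d d' dP [_ d'd] t' t't | j]; first by apply: dP; lra.
have [d [d_gt0 d_cont]] :=
  derivable_continuous_pt _ _ (exist _ _ (u_sol t j)) e e_gt0.
exists d; split=> // t' t't; case: (Req_dec t' t) => [-> | t'_neq].
  by rewrite Rminus_diag Rabs_R0.
by apply: d_cont; split; [split=> //; apply: not_eq_sym | exact: t't].
Qed.

Section Short_time.
Variables (u w : R -> vec n) (p : vec n) (r L t1 s : R).
Hypotheses (u_sol : is_solution F u) (w_sol : is_solution F w)
  (F_lip : lipschitz_on_box F p r L) (L_ge0 : 0 <= L)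
  (L_short : L * (s - t1) <= 1 / 2)
  (in_box : forall t, t1 <= t < s -> box (u t) p r /\ box (w t) p r).

Lemma solution_gap_halving d0 c : 0 <= c ->
  (forall j, Rabs (w t1 j - u t1 j) <= d0) ->
  (forall t, t1 <= t < s -> forall i, Rabs (w t i - u t i) <= c) ->
  forall t, t1 <= t <= s -> forall j, Rabs (w t j - u t j) <= d0 + c / 2.
Proof.
move=> c_ge0 gap0 gap_c t t_1s j.
have gap_t : Rabs (w t j - u t j - (w t1 j - u t1 j)) <= L * c * (t - t1).
  apply: (@MVT_abs_bound (fun τ => w τ j - u τ j) (fun τ => F (w τ) j - F (u τ) j))
    => [| τ _ | τ τ_1t]; [lra | exact: derivable_pt_lim_minus |].
  have [box_u box_w] := in_box (t := τ) ltac:(lra).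
  by apply: F_lip => //; apply: gap_c; lra.
have L_t : L * (t - t1) <= 1 / 2 by nra.
have : L * c * (t - t1) <= c / 2 by nra.
have := gap0 j; have := Rabs_triang_inv (w t j - u t j) (w t1 j - u t1 j); lra.
Qed.

(* Iterated halving: the a priori gap [2 r] inside the box shrinks to twice the initial gap. *)
Lemma solution_gap_short_time d0 : 0 <= r -> 0 <= d0 ->
  (forall j, Rabs (w t1 j - u t1 j) <= d0) ->
  forall t, t1 <= t <= s -> forall j, Rabs (w t j - u t j) <= 2 * d0.
Proof.
move=> r_ge0 d0_ge0 gap0.
have pow2_pos k : 0 < 2 ^ k by apply: pow_lt; lra.
have gap_k k : forall t, t1 <= t < s -> forall i, Rabs (w t i - u t i) <= 2 * d0 + 2 * r / 2 ^ k.
  elim: k => [|k IHk] t t_1s i.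
    have [box_u box_w] := in_box t_1s; have := box_u i; have := box_w i.
    rewrite /= Rdiv_1_r; have := Rabs_sub_triang (w t i) (p i) (u t i).
    by rewrite (Rabs_minus_sym (p i)); lra.
  have q_ge0 : 0 <= 2 * r / 2 ^ k by apply: Rle_mult_inv_pos; [lra | apply: pow2_pos].
  have := solution_gap_halving (c := 2 * d0 + 2 * r / 2 ^ k) ltac:(lra) gap0 IHk
    (t := t) ltac:(lra) i.
  by have -> : 2 * d0 + 2 * r / 2 ^ k.+1 = d0 + (2 * d0 + 2 * r / 2 ^ k) / 2
    by rewrite /=; field; have := pow2_pos k; lra.
move=> t t_1s j; apply: (@le_of_le_add_div_pow2 _ _ r r_ge0) => k.
have q_ge0 : 0 <= 2 * r / 2 ^ k by apply: Rle_mult_inv_pos; [lra | apply: pow2_pos].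
have := solution_gap_halving (c := 2 * d0 + 2 * r / 2 ^ k) ltac:(lra) gap0 (gap_k k) t_1s j.
by have -> : d0 + (2 * d0 + 2 * r / 2 ^ k) / 2 = 2 * d0 + r / 2 ^ k
  by field; have := pow2_pos k; lra.
Qed.

End Short_time.

(* Bootstrap: while the gap stays below [3 e] both solutions remain in the box, where the
   short-time estimate improves it to [2 e]. *)
Lemma solutions_stay_close u w p r L t1 h e :
  is_solution F u -> is_solution F w -> lipschitz_on_box F p r L -> 0 <= L ->
  0 <= h -> L * h <= 1 / 2 -> 0 < e -> e <= r / 8 ->
  (forall t, t1 <= t <= t1 + h -> forall i, Rabs (u t i - p i) < r / 2) ->
  (forall j, Rabs (w t1 j - u t1 j) < e) ->
  forall t, t1 <= t <= t1 + h -> forall j, Rabs (w t j - u t j) < 3 * e.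
Proof.
move=> u_sol w_sol F_lip L_ge0 h_ge0 L_short e_gt0 e_r u_near gap0.
apply: real_induction => [| | s s_1h close_lt_s]; first lra.
  by move=> j; have := gap0 j; lra.
have in_box t : t1 <= t < s -> box (u t) p r /\ box (w t) p r.
  move=> t_1s; split=> i; have := u_near t ltac:(lra) i; first lra.
  have := close_lt_s t t_1s i; have := Rabs_sub_triang (w t i) (u t i) (p i); lra.
have gap_s := @solution_gap_short_time u w p r L t1 s u_sol w_sol F_lip L_ge0
  ltac:(nra) in_box e ltac:(lra) ltac:(lra) (fun j => Rlt_le _ _ (gap0 j)).
have [dw [dw_gt0 w_cont]] := solution_continuous (e := e / 2) w_sol s ltac:(lra).
have [du [du_gt0 u_cont]] := solution_continuous (e := e / 2) u_sol s ltac:(lra).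
exists (Rmin dw du); split=> [| t t_s j]; first exact: Rmin_pos.
have := Rmin_l dw du; have := Rmin_r dw du => le_du le_dw.
have := w_cont t ltac:(rewrite Rabs_right; lra) j.
have := u_cont t ltac:(rewrite Rabs_right; lra) j.
have := gap_s s ltac:(lra) j.
have := Rabs_sub_triang (w t j) (w s j) (u t j).
have := Rabs_sub_triang (w s j) (u s j) (u t j).
rewrite (Rabs_minus_sym (u s j)); lra.
Qed.

(* Real induction on the horizon: the field is Lipschitz on a box around [u s], so closeness
   at a time shortly before [s] propagates a little past [s]. *)
Lemma solution_continuous_dependence u : locally_lipschitz F -> is_solution F u ->
  forall T, 0 <= T -> forall e, 0 < e -> exists d, 0 < d /\
    forall w, is_solution F w -> (forall j, Rabs (w 0 j - u 0 j) < d) ->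
      forall t, 0 <= t <= T -> forall j, Rabs (w t j - u t j) < e.
Proof.
move=> F_lip u_sol T T_ge0.
pose P s := forall e, 0 < e -> exists d, 0 < d /\
  forall w, is_solution F w -> (forall j, Rabs (w 0 j - u 0 j) < d) ->
    forall t, 0 <= t <= s -> forall j, Rabs (w t j - u t j) < e.
have P0 : P 0.
  move=> e e_gt0; exists e; split=> // w _ gap0 t t_0 j.
  by rewrite (_ : t = 0); [apply: gap0 | lra].
apply: (@real_induction 0 T P T_ge0 P0) => [s s_0T P_lt_s |]; last lra.
have [r [L [r_gt0 [L_ge0 F_lip_s]]]] := F_lip (u s).
have [dc [dc_gt0 u_cont]] := solution_continuous (e := r / 2) u_sol s ltac:(lra).
pose h := Rmin (dc / 2) (/ (2 * (L + 1))).
have inv_gt0 : 0 < / (2 * (L + 1)) by apply: Rinv_0_lt_compat; lra.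
have h_gt0 : 0 < h by apply: Rmin_pos; lra.
have h_dc : h <= dc / 2 by apply: Rmin_l.
have L_short : L * h <= 1 / 2.
  have : h <= / (2 * (L + 1)) by apply: Rmin_r.
  have : / (2 * (L + 1)) * (2 * (L + 1)) = 1 by field; lra.
  nra.
pose t1 := Rmax 0 (s - h / 2).
have t1_ge0 : 0 <= t1 by apply: Rmax_l.
have t1_ge : s - h / 2 <= t1 by apply: Rmax_r.
have t1_le : t1 <= s by rewrite /t1 /Rmax; case: Rle_dec; lra.
have P_t1 : P t1.
  case: (Rlt_le_dec t1 s) => t1s; first by apply: P_lt_s; lra.
  by rewrite (_ : t1 = 0) //; move: t1s; rewrite /t1 /Rmax; case: Rle_dec; lra.
exists (h / 2); split=> [| s' s'_s e e_gt0]; first lra.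
pose e1 := Rmin (e / 3) (r / 8).
have e1_gt0 : 0 < e1 by apply: Rmin_pos; lra.
have e1_e : e1 <= e / 3 by apply: Rmin_l.
have e1_r : e1 <= r / 8 by apply: Rmin_r.
have [d1 [d1_gt0 close_t1]] := P_t1 e1 e1_gt0.
exists d1; split=> // w w_sol gap0 t t_0s' j.
case: (Rle_lt_dec t t1) => t_t1; first by have := close_t1 w w_sol gap0 t ltac:(lra) j; lra.
have := @solutions_stay_close u w (u s) r L t1 h e1 u_sol w_sol F_lip_s L_ge0
  ltac:(lra) L_short e1_gt0 e1_r
  ltac:(by move=> τ τ_1h i; apply: u_cont; apply: Rabs_def1; lra)
  ltac:(by apply: close_t1 => //; lra) t ltac:(lra) j.
lra.
Qed.

Lemma is_solution_shift u s : is_solution F u -> is_solution F (fun t => u (t + s)).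
Proof. by move=> u_sol t j; apply: (derivable_pt_lim_shift (g := fun t => u t j)). Qed.

End Solutions.

Definition rev_field {n} (F : vec n -> vec n) : vec n -> vec n := fun x j => - F x j.

Lemma is_solution_rev n (F : vec n -> vec n) u :
  is_solution F u -> is_solution (rev_field F) (fun t => u (- t)).
Proof. by move=> u_sol t j; apply: (derivable_pt_lim_mirror (g := fun t => u t j)). Qed.

Lemma locally_lipschitz_rev n (F : vec n -> vec n) :
  locally_lipschitz F -> locally_lipschitz (rev_field F).
Proof.
move=> F_lip p; have [r [L [r_gt0 [L_ge0 F_lip_p]]]] := F_lip p.
exists r, L; split=> //; split=> // a b c c_ge0 a_box b_box ab_c j.
rewrite /rev_field (_ : - F a j - - F b j = - (F a j - F b j)); last ring.
by rewrite Rabs_Ropp; apply: F_lip_p.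
Qed.

Lemma solution_unique_fwd n (F : vec n -> vec n) u w :
  locally_lipschitz F -> is_solution F u -> is_solution F w -> u 0 = w 0 ->
  forall t, 0 <= t -> u t = w t.
Proof.
move=> F_lip u_sol w_sol uw0 t t_ge0; apply: functional_extensionality => j.
apply: cond_eq => e e_gt0.
have [d [d_gt0 close]] := solution_continuous_dependence F_lip u_sol t_ge0 e_gt0.
rewrite Rabs_minus_sym; apply: close => //; last lra.
by move=> i; rewrite uw0 Rminus_diag Rabs_R0.
Qed.

Lemma solution_unique n (F : vec n -> vec n) u w :
  locally_lipschitz F -> is_solution F u -> is_solution F w -> u 0 = w 0 ->
  forall t, u t = w t.
Proof.
move=> F_lip u_sol w_sol uw0 t.
case: (Rle_lt_dec 0 t) => t_sign; first exact: solution_unique_fwd.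
have := solution_unique_fwd (locally_lipschitz_rev F_lip) (is_solution_rev u_sol)
  (is_solution_rev w_sol) ltac:(by rewrite /= Ropp_0) (t := - t) ltac:(lra).
by rewrite Ropp_involutive.
Qed.

Section Flow.
Variables (n : nat) (f : vec n -> vec n) (phi : vec n -> R -> vec n).
Hypotheses (f_lip : locally_lipschitz f) (phi_flow : is_flow f phi).

Lemma flow0 x : phi x 0 = x.
Proof. exact: (proj1 (phi_flow x)). Qed.

Lemma flow_solution x : is_solution f (phi x).
Proof. exact: (proj2 (phi_flow x)). Qed.

Lemma flow_comp x s t : phi (phi x s) t = phi x (s + t).
Proof.
rewrite Rplus_comm; apply: (solution_unique (w := fun t => phi x (t + s))) f_lip _ _ _ t.
- exact: flow_solution.
- exact: is_solution_shift (flow_solution x).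
- by rewrite flow0 Rplus_0_l.
Qed.

Lemma flow_continuous_bwd x T e : 0 <= T -> 0 < e -> exists d, 0 < d /\
  forall y, (forall j, Rabs (y j - x j) < d) ->
    forall t, 0 <= t <= T -> forall j, Rabs (phi y (- t) j - phi x (- t) j) < e.
Proof.
move=> T_ge0 e_gt0.
have [d [d_gt0 close]] := solution_continuous_dependence (locally_lipschitz_rev f_lip)
  (is_solution_rev (flow_solution x)) T_ge0 e_gt0.
exists d; split=> // y yx t t_0T j.
apply: (close (fun t => phi y (- t))) => //; first exact: is_solution_rev (flow_solution y).
by move=> i; rewrite Ropp_0 !flow0.
Qed.

Lemma flow_continuous x t e : 0 < e -> exists d, 0 < d /\
  forall y, (forall j, Rabs (y j - x j) < d) -> forall j, Rabs (phi y t j - phi x t j) < e.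
Proof.
move=> e_gt0; case: (Rle_lt_dec 0 t) => t_sign.
  have [d [d_gt0 close]] := solution_continuous_dependence f_lip (flow_solution x)
    t_sign e_gt0.
  exists d; split=> // y yx; apply: close (flow_solution y) _ _ _; last lra.
  by move=> j; rewrite !flow0.
have [d [d_gt0 close]] := flow_continuous_bwd x (T := - t) ltac:(lra) e_gt0.
exists d; split=> // y yx j.
by have := close y yx (- t) ltac:(lra) j; rewrite Ropp_involutive.
Qed.

End Flow.

Section Smooth_lipschitz.
Variable n : nat.

Lemma Ck1_partial_bounded (g : vec n -> R) p : Ck 1 g -> exists r, 0 < r /\
  forall i, exists dg : vec n -> R,
    (forall x, derivable_pt_lim (fun s => g (vadd x (vscal s (ebasis i)))) 0 (dg x)) /\
    forall w, box w p r -> Rabs (dg w) <= / r.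
Proof.
move=> [_ g_partial].
apply: (ord_common_delta (P := fun i d => exists dg : vec n -> R,
  (forall x, derivable_pt_lim (fun s => g (vadd x (vscal s (ebasis i)))) 0 (dg x)) /\
  forall w, box w p d -> Rabs (dg w) <= / d)) => [i d d' [dg [dg_der dg_le]] d'_d | i].
  exists dg; split=> // w w_box.
  have : / d <= / d' by apply: Rinv_le_contravar; lra.
  by have := dg_le w ltac:(by move=> k; have := w_box k; lra); lra.
have [dg [dg_der dg_cont]] := g_partial i.
have [rho [rho_gt0 dg_near]] := dg_cont p 1 Rlt_0_1.
have K_gt0 := Kdim_gt0 n.
have c_gt0 : 0 < rho / (2 * Kdim n) by apply: Rdiv_lt_0_compat; lra.
have inv_gt0 : 0 < / (Rabs (dg p) + 1).
  by apply: Rinv_0_lt_compat; have := Rabs_pos (dg p); lra.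
pose d := Rmin (rho / (2 * Kdim n) / 2) (/ (Rabs (dg p) + 1)).
have d_gt0 : 0 < d by apply: Rmin_pos => //; lra.
exists d; split=> //; exists dg; split=> // w w_box.
have w_near : vnorm (vsub w p) < rho.
  apply: vnorm_vsub_lt => // k; have := w_box k.
  have := Rmin_l (rho / (2 * Kdim n) / 2) (/ (Rabs (dg p) + 1)); rewrite -/d; lra.
have : / (/ (Rabs (dg p) + 1)) <= / d by apply: Rinv_le_contravar => //; apply: Rmin_r.
rewrite Rinv_inv; have := dg_near w w_near; have := Rabs_triang_inv (dg w) (dg p); lra.
Qed.

Definition mix (k : nat) (a b : vec n) : vec n :=
  fun i => if (nat_of_ord i < k)%N then b i else a i.

Lemma mix_succ k (k_lt : (k < n)%N) a b : let o := Ordinal k_lt in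
  mix k.+1 a b = vadd (mix k a b) (vscal (b o - a o) (ebasis o)).
Proof.
apply: functional_extensionality => i; rewrite /mix /vadd /vscal /ebasis.
have [ik | ki | ik] := ltngtP (nat_of_ord i) k.
- have /negbTE -> : i != Ordinal k_lt by apply/eqP => eik; move: ik; rewrite eik ltnn.
  by rewrite ltnS (ltnW ik); ring.
- have /negbTE -> : i != Ordinal k_lt by apply/eqP => eik; move: ki; rewrite eik ltnn.
  have -> : (i < k.+1)%N = false by rewrite ltnS leqNgt ki.
  by rewrite Rmult_0_r Rplus_0_r.
- have -> : i = Ordinal k_lt by apply: val_inj.
  by rewrite eqxx /= ltnSn; ring.
Qed.

(* Telescope along [a = mix 0 a b, ..., mix n a b = b], which moves one coordinate at a time. *)
Lemma lipschitz_of_partials_bounded (g : vec n -> R) p r M :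
  (forall i, exists dg : vec n -> R,
    (forall x, derivable_pt_lim (fun s => g (vadd x (vscal s (ebasis i)))) 0 (dg x)) /\
    forall w, box w p r -> Rabs (dg w) <= M) ->
  forall a b c, box a p r -> box b p r -> (forall i, Rabs (a i - b i) <= c) ->
    Rabs (g b - g a) <= INR n * M * c.
Proof.
move=> g_partial a b c a_box b_box ab_c.
suff mix_le k : (k <= n)%N -> Rabs (g (mix k a b) - g a) <= INR k * M * c.
  by rewrite (_ : b = mix n a b); [apply: mix_le | apply: functional_extensionality => i;
    rewrite /mix ltn_ord].
elim: k => [|k IHk] k_le.
  rewrite (_ : mix 0 a b = a) /=; last exact: functional_extensionality.
  by rewrite Rminus_diag Rabs_R0; lra.
pose o := Ordinal k_le; pose x := mix k a b.
have [dg [dg_der dg_le]] := g_partial o.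
pose gk s := g (vadd x (vscal s (ebasis o))).
have gk_der s : derivable_pt_lim gk s (dg (vadd x (vscal s (ebasis o)))).
  apply: derivable_pt_lim_of_shifted.
  rewrite (_ : (fun h => gk (s + h)) =
     (fun h => g (vadd (vadd x (vscal s (ebasis o))) (vscal h (ebasis o))))) //.
  apply: functional_extensionality => h; rewrite /gk; f_equal.
  by apply: functional_extensionality => i; rewrite /vadd /vscal; ring.
have [s [gk_mvt s_between]] := MVT_abs gk (fun s => dg (vadd x (vscal s (ebasis o))))
  0 (b o - a o) (fun s _ => gk_der s).
have seg_box : box (vadd x (vscal s (ebasis o))) p r.
  move=> i; rewrite /vadd /vscal /ebasis /x /mix.
  case: eqP => [-> | _]; last first.
    by rewrite Rmult_0_r Rplus_0_r; case: ifP => _; [apply: b_box | apply: a_box].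
  rewrite /= ltnn Rmult_1_r; have := a_box o; have := b_box o; move: s_between.
  by rewrite /Rmin /Rmax; case: (Rle_dec 0 (b o - a o)) => _ ? ? ?; split_Rabs; lra.
have gk_step : Rabs (gk (b o - a o) - gk 0) <= M * c.
  rewrite gk_mvt Rminus_0_r Rabs_minus_sym; have := ab_c o; have := dg_le _ seg_box.
  by have := Rabs_pos (dg (vadd x (vscal s (ebasis o)))); have := Rabs_pos (a o - b o); nra.
have gk0 : gk 0 = g x.
  by rewrite /gk; f_equal; apply: functional_extensionality => i; rewrite /vadd /vscal; ring.
rewrite /gk /x -mix_succ -/x -/(gk 0) gk0 in gk_step.
have := IHk (ltnW k_le); rewrite -/x.
have := Rabs_sub_triang (g (mix k.+1 a b)) (g x) (g a); rewrite S_INR; lra.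
Qed.

Lemma smooth_locally_lipschitz (f : vec n -> vec n) : smooth f -> locally_lipschitz f.
Proof.
move=> f_smooth p.
have [r [r_gt0 f_lip]] : exists r, 0 < r /\ forall j a b c, 0 <= c -> box a p r -> box b p r ->
    (forall i, Rabs (a i - b i) <= c) -> Rabs (f a j - f b j) <= INR n * / r * c.
  apply: ord_common_delta => [j d d' lip_d [d'_gt0 d'_d] a b c c_ge0 a_box b_box ab_c | j].
    have : INR n * / d <= INR n * / d'.
      by apply: Rmult_le_compat_l; [apply: pos_INR | apply: Rinv_le_contravar].
    have := lip_d a b c c_ge0 ltac:(move=> i; have := a_box i; lra)
      ltac:(move=> i; have := b_box i; lra) ab_c.
    nra.
  have [r [r_gt0 partial_bd]] := Ck1_partial_bounded p (f_smooth j 1%nat).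
  exists r; split=> // a b c _ a_box b_box ab_c; rewrite Rabs_minus_sym.
  exact: (lipschitz_of_partials_bounded (g := fun x => f x j) partial_bd a_box b_box ab_c).
exists r, (INR n * / r); split=> //; split; last by move=> *; apply: f_lip.
by apply: Rmult_le_pos; [apply: pos_INR | apply: Rlt_le; apply: Rinv_0_lt_compat].
Qed.

End Smooth_lipschitz.

Definition negsq (s : R) : R := Rsqr (Rmin s 0).

Lemma derivable_pt_lim_negsq s : derivable_pt_lim negsq s (2 * Rmin s 0).
Proof.
move=> e e_gt0; exists (mkposreal e e_gt0) => h h_neq0 /= h_lt.
have rem : Rabs (negsq (s + h) - negsq s - 2 * Rmin s 0 * h) <= Rabs h * Rabs h.
  rewrite -Rabs_mult /negsq /Rsqr /Rmin.
  by case: (Rle_dec (s + h) 0); case: (Rle_dec s 0) => ? ?; split_Rabs; nra.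
have h_abs : 0 < Rabs h by apply: Rabs_pos_lt.
rewrite (_ : (negsq (s + h) - negsq s) / h - 2 * Rmin s 0 =
  (negsq (s + h) - negsq s - 2 * Rmin s 0 * h) / h); last by field.
rewrite /Rdiv Rabs_mult Rabs_inv; apply: (Rle_lt_trans _ (Rabs h)) => //.
have inv_gt0 : 0 < / Rabs h by apply: Rinv_0_lt_compat.
have : Rabs h * Rabs h * / Rabs h = Rabs h by field; lra.
nra.
Qed.

(* A C^1 cut-off decreasing from [1] at time [0] to [0] at time [T]. *)
Definition ramp (T t : R) : R := negsq (t - T) / Rsqr T.

Definition ramp_deriv (T t : R) : R := 2 * Rmin (t - T) 0 / Rsqr T.

Lemma derivable_pt_lim_ramp T t : derivable_pt_lim (ramp T) t (ramp_deriv T t).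
Proof.
apply: derivable_pt_lim_div_scal.
exact: (derivable_pt_lim_shift (g := negsq) (s := - T) (derivable_pt_lim_negsq _)).
Qed.

Lemma ramp0 T : 0 < T -> ramp T 0 = 1.
Proof.
move=> T_gt0; rewrite /ramp /negsq Rminus_0_l Rmin_left; last lra.
by rewrite -Rsqr_neg /Rsqr; field; lra.
Qed.

Lemma ramp_after T t : T <= t -> ramp T t = 0 /\ ramp_deriv T t = 0.
Proof.
move=> T_t; rewrite /ramp /ramp_deriv /negsq Rmin_right; last lra.
by rewrite Rsqr_0 /Rdiv; split; ring.
Qed.

Lemma ramp_bounds T t : 0 < T -> 0 <= t <= T ->
  0 <= ramp T t <= 1 /\ Rabs (ramp_deriv T t) <= 2 / T.
Proof.
move=> T_gt0 t_0T; rewrite /ramp /ramp_deriv /negsq Rmin_left; last lra.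
have TT_gt0 : 0 < Rsqr T by apply: Rlt_0_sqr; lra.
split; first split.
- by apply: Rle_mult_inv_pos => //; apply: Rle_0_sqr.
- apply: (Rmult_le_reg_r (Rsqr T)) => //; rewrite /Rdiv Rmult_assoc Rinv_l; last lra.
  by rewrite /Rsqr; nra.
- rewrite /Rdiv Rabs_mult Rabs_inv Rabs_mult (Rabs_right (Rsqr T)); last lra.
  rewrite (Rabs_right 2); last lra.
  rewrite (_ : 2 * / T = 2 * T * / Rsqr T); last by rewrite /Rsqr; field; lra.
  apply: Rmult_le_compat_r; first by apply: Rlt_le; apply: Rinv_0_lt_compat.
  by split_Rabs; lra.
Qed.

(* The bridge [q t + ramp T t * (v - q 0)] is a [mu]-solution from [v] to [q T]: the
   perturbation of the field is at most [L * D] and the ramp contributes [2 D / T]. *)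
Lemma eps_reach_bridge n (f : vec n -> vec n) mu (X : set_ n) q p r L T D v :
  is_solution f q -> lipschitz_on_box f p r L -> 0 <= L -> 0 < T -> 0 <= D -> D <= r / 2 ->
  (forall t, 0 <= t <= T -> box (q t) p (r / 2)) ->
  (forall j, Rabs (v j - q 0 j) <= D) ->
  Kdim n * (D * (L + 2 / T)) <= mu -> X v -> eps_reach f mu X (q T).
Proof.
move=> q_sol f_lip L_ge0 T_gt0 D_ge0 D_r q_box vq0 D_mu Xv.
have two_T : 0 < 2 / T by apply: Rdiv_lt_0_compat; lra.
have bound_ge0 : 0 <= D * (L + 2 / T) by apply: Rmult_le_pos => //; lra.
pose d := vsub v (q 0); pose x t i := q t i + ramp T t * d i.
have d_le i : Rabs (d i) <= D := vq0 i.
have x_after t : T <= t -> x t = q t.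
  move=> T_t; have [ramp_t _] := ramp_after T_t.
  by apply: functional_extensionality => i; rewrite /x ramp_t; ring.
exists x, T; split; last split; last split; [| | lra |]; last by rewrite x_after //; lra.
  move=> t t_ge0; exists (fun j => f (q t) j + ramp_deriv T t * d j); split.
    move=> j; apply: derivable_pt_lim_deriv_nonneg.
    apply: (derivable_pt_lim_plus (fun s => q s j) (fun s => ramp T s * d j)) => //.
    exact: derivable_pt_lim_scal_right (derivable_pt_lim_ramp T t).
  apply: Rle_trans D_mu; apply: vnorm_le_coord => // j; rewrite /vsub.
  case: (Rle_lt_dec t T) => t_T; last first.
    have [_ ->] := ramp_after (Rlt_le _ _ t_T); rewrite x_after; last lra.
    by rewrite Rmult_0_l Rplus_0_r Rminus_diag Rabs_R0.
  have [[ramp_ge0 ramp_le1] ramp'_le] := ramp_bounds T_gt0 (conj t_ge0 t_T).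
  have rd_le i : Rabs (ramp T t * d i) <= D.
    rewrite Rabs_mult (Rabs_right (ramp T t)); last lra.
    by have := d_le i; have := Rabs_pos (d i); nra.
  have f_near : Rabs (f (x t) j - f (q t) j) <= L * D.
    apply: f_lip => // i; have := q_box t (conj t_ge0 t_T) i; have := rd_le i; rewrite /x.
    - by have := Rabs_sub_triang (q t i + ramp T t * d i) (q t i) (p i);
        rewrite (_ : q t i + ramp T t * d i - q t i = ramp T t * d i); [lra | ring].
    - by lra.
    - by rewrite (_ : q t i + ramp T t * d i - q t i = ramp T t * d i); [lra | ring].
  have ramp'_d : Rabs (ramp_deriv T t * d j) <= 2 / T * D.
    rewrite Rabs_mult; have := d_le j; have := Rabs_pos (d j).
    by have := Rabs_pos (ramp_deriv T t); nra.
  have := Rabs_triang (f (x t) j - f (q t) j) (- (ramp_deriv T t * d j)).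
  rewrite Rabs_Ropp (_ : f (x t) j - f (q t) j + - (ramp_deriv T t * d j) =
    f (x t) j - (f (q t) j + ramp_deriv T t * d j)); [lra | ring].
rewrite (_ : x 0 = v) //; apply: functional_extensionality => i.
by rewrite /x ramp0 // /d /vsub; ring.
Qed.

Definition sinterior {n} (S : set_ n) : set_ n :=
  fun x => exists r, 0 < r /\ forall w, (forall i, Rabs (w i - x i) < r) -> S w.

Section Closure_interior.
Variables (n : nat) (S : set_ n).

Lemma sclosure_subset x : S x -> sclosure S x.
Proof. by move=> Sx r r_gt0; exists x; rewrite vnorm_vsub_diag. Qed.

Lemma sclosure_idem x : sclosure (sclosure S) x -> sclosure S x.
Proof.
move=> x_cl r r_gt0; have K_gt0 := Kdim_gt0 n.
have c_gt0 : 0 < r / (2 * Kdim n) / 2 by apply: Rdiv_lt_0_compat; [apply: Rdiv_lt_0_compat|]; lra.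
have [y [y_cl yx]] := x_cl _ c_gt0; have [z [Sz zy]] := y_cl _ c_gt0.
exists z; split=> //; apply: vnorm_vsub_lt => // i.
have := vnorm_vsub_lt_coord zy i; have := vnorm_vsub_lt_coord yx i.
have := Rabs_sub_triang (z i) (y i) (x i); lra.
Qed.

Lemma not_sclosure_nbhd x : ~ sclosure S x ->
  exists r, 0 < r /\ forall w, (forall i, Rabs (w i - x i) < r) -> ~ sclosure S w.
Proof.
move=> x_ncl; have K_gt0 := Kdim_gt0 n.
have [r [r_gt0 far]] : exists r, 0 < r /\ forall y, S y -> r <= vnorm (vsub y x).
  apply: NNPP => no_r; apply: x_ncl => r r_gt0; apply: NNPP => no_y; apply: no_r.
  exists r; split=> // y Sy; apply: Rnot_lt_le => yx; apply: no_y; by exists y.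
have c_gt0 : 0 < r / (2 * Kdim n) / 2 by apply: Rdiv_lt_0_compat; [apply: Rdiv_lt_0_compat|]; lra.
exists (r / (2 * Kdim n) / 2); split=> // w wx w_cl.
have [y [Sy yw]] := w_cl _ c_gt0.
suff : vnorm (vsub y x) < r by have := far y Sy; lra.
apply: vnorm_vsub_lt => // i; have := vnorm_vsub_lt_coord yw i; have := wx i.
have := Rabs_sub_triang (y i) (w i) (x i); lra.
Qed.

Lemma sinterior_subset x : sinterior S x -> S x.
Proof. by move=> [r [r_gt0 near_S]]; apply: near_S => i; rewrite Rminus_diag Rabs_R0. Qed.

Lemma sinterior_nbhd x : sinterior S x ->
  exists r, 0 < r /\ forall w, (forall i, Rabs (w i - x i) < r) -> sinterior S w.
Proof.
move=> [r [r_gt0 near_S]]; exists (r / 2); split=> [| w wx]; first lra.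
exists (r / 2); split=> [| y yw]; first lra.
apply: near_S => i; have := wx i; have := yw i; have := Rabs_sub_triang (y i) (w i) (x i); lra.
Qed.

Lemma sinterior_not_boundary x : sinterior S x -> ~ sboundary (sclosure S) x.
Proof.
move=> [r [r_gt0 near_S]] [_ x_cl_out]; have [w [w_out wx]] := x_cl_out r r_gt0.
by apply: w_out; apply: sclosure_subset; apply: near_S; apply: vnorm_vsub_lt_coord.
Qed.

Lemma sboundary_sclosure x : sboundary (sclosure S) x -> sclosure S x.
Proof. by move=> [x_cl _]; apply: sclosure_idem. Qed.

End Closure_interior.

Lemma solution_sclosure_left n (F : vec n -> vec n) (S : set_ n) u s1 s :
  is_solution F u -> s1 < s -> (forall t, s1 <= t < s -> S (u t)) -> sclosure S (u s).
Proof.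
move=> u_sol s1s S_left r r_gt0; have K_gt0 := Kdim_gt0 n.
have [d [d_gt0 u_cont]] := solution_continuous (e := r / (2 * Kdim n)) u_sol s
  ltac:(apply: Rdiv_lt_0_compat; lra).
pose t := Rmax s1 (s - d / 2).
have t_ge : s - d / 2 <= t by apply: Rmax_r.
have t_lt : t < s by rewrite /t /Rmax; case: Rle_dec; lra.
exists (u t); split; first by apply: S_left; split; [apply: Rmax_l | lra].
by apply: vnorm_vsub_lt => // i; apply: u_cont; rewrite Rabs_left; lra.
Qed.

Section Robust_certificate.
Variables (n : nat) (f : vec n -> vec n) (phi : vec n -> R -> vec n) (V : set_ n) (mu : R).
Hypotheses (f_lip : locally_lipschitz f) (phi_flow : is_flow f phi) (mu_gt0 : 0 < mu)
  (V_robust : ssubset (eps_reach f mu V) V).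

Let flow0 := flow0 phi_flow.
Let flow_comp := flow_comp f_lip phi_flow.
Let flow_solution := flow_solution phi_flow.

Lemma flow_forward_invariant x t : V x -> 0 <= t -> V (phi x t).
Proof.
move=> Vx t_ge0; apply: V_robust; exists (phi x), t; split; last by rewrite flow0.
move=> s s_ge0; exists (f (phi x s)); split; last by rewrite vnorm_vsub_diag; lra.
by move=> j; apply: derivable_pt_lim_deriv_nonneg; apply: flow_solution.
Qed.

Lemma sinterior_flow_invariant x t : sinterior V x -> 0 <= t -> sinterior V (phi x t).
Proof.
move=> [r [r_gt0 near_V]] t_ge0.
have [d [d_gt0 back]] := flow_continuous f_lip phi_flow (phi x t) (- t) r_gt0.
exists d; split=> // w wx.
have := back w wx; rewrite flow_comp Rplus_opp_r flow0 => /near_V /flow_forward_invariant.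
by move=> /(_ t t_ge0); rewrite flow_comp Rplus_opp_l flow0.
Qed.

Lemma sclosure_flow_sinterior z t : sclosure V z -> 0 < t -> sinterior V (phi z t).
Proof.
move=> Vz t_gt0; have K_gt0 := Kdim_gt0 n.
have [r [L [r_gt0 [L_ge0 f_lip_z]]]] := f_lip z.
have [dc [dc_gt0 z_near]] := solution_continuous (e := r / 4) (flow_solution z) 0 ltac:(lra).
pose t0 := Rmin t (dc / 2).
have t0_gt0 : 0 < t0 by apply: Rmin_pos; lra.
have t0_t : t0 <= t by apply: Rmin_l.
have t0_dc : t0 <= dc / 2 by apply: Rmin_r.
pose A := 2 * Kdim n * (L + 2 / t0).
have two_t0 : 0 < 2 / t0 by apply: Rdiv_lt_0_compat; lra.
have A_gt0 : 0 < A by apply: Rmult_lt_0_compat; lra.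
pose e := Rmin (r / 8) (mu / A).
have e_gt0 : 0 < e by apply: Rmin_pos; [lra | apply: Rdiv_lt_0_compat].
have e_r : e <= r / 8 by apply: Rmin_l.
have e_mu : Kdim n * (2 * e * (L + 2 / t0)) <= mu.
  have eA : e * A <= mu / A * A.
    by apply: Rmult_le_compat_r; [apply: Rlt_le | apply: Rmin_r].
  rewrite (_ : mu / A * A = mu) in eA; last by field; apply: Rgt_not_eq.
  by rewrite (_ : Kdim n * (2 * e * (L + 2 / t0)) = e * A) // /A; ring.
have [d [d_gt0 back_close]] :=
  flow_continuous_bwd f_lip phi_flow (phi z t0) (Rlt_le _ _ t0_gt0) e_gt0.
suff V_t0 : sinterior V (phi z t0).
  have := sinterior_flow_invariant V_t0 (t := t - t0) ltac:(lra).
  by rewrite flow_comp (_ : t0 + (t - t0) = t) //; ring.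
exists d; split=> // w wt0.
pose q tau := phi w (tau + - t0).
have q_close tau : 0 <= tau <= t0 -> forall j, Rabs (q tau j - phi z tau j) < e.
  move=> tau_0t0 j; have := back_close w wt0 (t0 - tau) ltac:(lra) j.
  rewrite flow_comp (_ : t0 + - (t0 - tau) = tau); last ring.
  by rewrite /q (_ : tau + - t0 = - (t0 - tau)); last ring.
have z_flow_near tau : 0 <= tau <= t0 -> forall i, Rabs (phi z tau i - z i) < r / 4.
  by move=> tau_0t0 i; rewrite -{2}(flow0 z); apply: z_near; rewrite Rminus_0_r Rabs_right; lra.
have [v [Vv vz]] := Vz e e_gt0.
rewrite (_ : w = q t0); last by rewrite /q Rplus_opp_r flow0.
apply: V_robust; apply: (eps_reach_bridge (q := q) (is_solution_shift (- t0) (flow_solution w))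
  f_lip_z L_ge0 t0_gt0 _ _ _ _ e_mu Vv) => [| | tau tau_0t0 i | j]; try lra.
- have := q_close tau tau_0t0 i; have := z_flow_near tau tau_0t0 i.
  have := Rabs_sub_triang (q tau i) (phi z tau i) (z i); rewrite /q; lra.
- have := vnorm_vsub_lt_coord vz j; have := q_close 0 ltac:(lra) j.
  rewrite flow0 /q; have := Rabs_sub_triang (v j) (z j) (phi w (0 + - t0) j).
  rewrite (Rabs_minus_sym (z j)); lra.
Qed.

Lemma sclosure_flow_invariant x t : sclosure V x -> 0 <= t -> sclosure V (phi x t).
Proof.
move=> Vx /Rle_lt_or_eq_dec [t_gt0 | <-]; last by rewrite flow0.
by apply: sclosure_subset; apply: sinterior_subset; apply: sclosure_flow_sinterior.
Qed.

Lemma sboundary_flow_past z t : sboundary (sclosure V) z -> t < 0 -> ~ sclosure V (phi z t).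
Proof.
move=> z_bd t_lt0 z_cl; apply: sinterior_not_boundary z_bd.
by have := sclosure_flow_sinterior z_cl (t := - t) ltac:(lra); rewrite flow_comp Rplus_opp_r flow0.
Qed.

Lemma crossing_time_le y a tau : sclosure V (phi y a) ->
  sboundary (sclosure V) (phi y tau) -> tau <= a.
Proof.
move=> ya_cl y_bd; apply: Rnot_lt_le => a_tau; apply: sinterior_not_boundary y_bd.
have := sclosure_flow_sinterior ya_cl (t := tau - a) ltac:(lra).
by rewrite flow_comp (_ : a + (tau - a) = tau); last ring.
Qed.

Lemma crossing_time_ge y b tau : ~ sclosure V (phi y b) ->
  sboundary (sclosure V) (phi y tau) -> b <= tau.
Proof.
move=> yb_out y_bd; apply: Rnot_lt_le => tau_b; apply: yb_out.
have := sclosure_flow_invariant (sboundary_sclosure y_bd) (t := b - tau) ltac:(lra).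
by rewrite flow_comp (_ : tau + (b - tau) = b); last ring.
Qed.

Lemma flow_reach_crossing_time x : flow_reach phi (sboundary (sclosure V)) x ->
  exists tau, sboundary (sclosure V) (phi x tau).
Proof. by move=> [b [t [b_bd ->]]]; exists (- t); rewrite flow_comp Rplus_opp_r flow0. Qed.

Lemma flow_sinterior_nbhd x a : sinterior V (phi x a) ->
  exists d, 0 < d /\ forall y, vnorm (vsub y x) < d -> sinterior V (phi y a).
Proof.
move=> /sinterior_nbhd [r [r_gt0 near_int]].
have [d [d_gt0 close]] := flow_continuous f_lip phi_flow x a r_gt0.
by exists d; split=> // y yx; apply/near_int/close/vnorm_vsub_lt_coord.
Qed.

Lemma flow_not_sclosure_nbhd x b : ~ sclosure V (phi x b) ->
  exists d, 0 < d /\ forall y, vnorm (vsub y x) < d -> ~ sclosure V (phi y b).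
Proof.
move=> /not_sclosure_nbhd [r [r_gt0 near_out]].
have [d [d_gt0 close]] := flow_continuous f_lip phi_flow x b r_gt0.
by exists d; split=> // y yx; apply/near_out/close/vnorm_vsub_lt_coord.
Qed.

(* The first time the orbit meets the closure is a boundary point. *)
Lemma flow_reach_of_crossing y s1 s2 : s1 < s2 ->
  ~ sclosure V (phi y s1) -> sinterior V (phi y s2) ->
  flow_reach phi (sboundary (sclosure V)) y.
Proof.
move=> s12 out1 in2; apply: NNPP => no_cross.
suff out : forall t, s1 <= t <= s2 -> ~ sclosure V (phi y t).
  by apply: (out s2); [lra | apply: sclosure_subset; apply: sinterior_subset].
apply: (@real_induction s1 s2 (fun t => ~ sclosure V (phi y t)))
  => [| | s s_12 out_lt_s]; [lra | exact: out1 |].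
have out_s : ~ sclosure V (phi y s).
  move=> ys_cl; case: (Rle_lt_or_eq_dec s1 s (proj1 s_12)) => [s1s | s1_s].
    2: by apply: out1; rewrite s1_s.
  apply: no_cross; exists (phi y s), (- s); split; last by rewrite flow_comp Rplus_opp_r flow0.
  split; first exact: sclosure_subset.
  apply: (solution_sclosure_left (flow_solution y) s1s) => τ τ_1s.
  by apply: out_lt_s; lra.
have [r [r_gt0 near_out]] := not_sclosure_nbhd out_s.
have [d [d_gt0 y_cont]] := solution_continuous (flow_solution y) s r_gt0.
by exists d; split=> // t t_s; apply/near_out/y_cont; rewrite Rabs_right; lra.
Qed.

Lemma flow_reach_open : is_open (flow_reach phi (sboundary (sclosure V))).
Proof.
move=> x /flow_reach_crossing_time [tau x_bd].
have x_out : ~ sclosure V (phi x (tau + -1)).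
  by rewrite -flow_comp; apply: sboundary_flow_past x_bd _; lra.
have x_int : sinterior V (phi x (tau + 1)).
  by rewrite -flow_comp; apply: sclosure_flow_sinterior (sboundary_sclosure x_bd) _; lra.
have [d1 [d1_gt0 near_out]] := flow_not_sclosure_nbhd x_out.
have [d2 [d2_gt0 near_int]] := flow_sinterior_nbhd x_int.
exists (Rmin d1 d2); split=> [| y yx]; first exact: Rmin_pos.
apply: (flow_reach_of_crossing (s1 := tau + -1) (s2 := tau + 1)); first lra.
  by apply: near_out; have := Rmin_l d1 d2; lra.
by apply: near_int; have := Rmin_r d1 d2; lra.
Qed.

Lemma crossing_time_continuous nu :
  (forall x, flow_reach phi (sboundary (sclosure V)) x ->
    sboundary (sclosure V) (phi x (- nu x))) ->
  cont_on (flow_reach phi (sboundary (sclosure V))) nu.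
Proof.
move=> nu_cross x x_reach e e_gt0; have x_bd := nu_cross x x_reach.
have x_out : ~ sclosure V (phi x (- nu x + - (e / 2))).
  by rewrite -flow_comp; apply: sboundary_flow_past x_bd _; lra.
have x_int : sinterior V (phi x (- nu x + e / 2)).
  by rewrite -flow_comp; apply: sclosure_flow_sinterior (sboundary_sclosure x_bd) _; lra.
have [d1 [d1_gt0 near_out]] := flow_not_sclosure_nbhd x_out.
have [d2 [d2_gt0 near_int]] := flow_sinterior_nbhd x_int.
exists (Rmin d1 d2); split=> [| y y_reach yx]; first exact: Rmin_pos.
have y_bd := nu_cross y y_reach.
have := crossing_time_ge (near_out y ltac:(have := Rmin_l d1 d2; lra)) y_bd.
have := crossing_time_le (sclosure_subset (sinterior_subset
  (near_int y ltac:(have := Rmin_r d1 d2; lra)))) y_bd.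
move=> *; apply: Rabs_def1; lra.
Qed.

End Robust_certificate.

Theorem lemma3 (n : nat) (f : vec n -> vec n) (phi : vec n -> R -> vec n)
  (I U V : set_ n) (mu : R) :
  smooth f ->
  is_flow f phi ->
  robustly_safe f I U mu ->
  sdisjoint (sclosure I) (sclosure U) ->
  sbounded (setC_ U) ->
  robust_certificate f I U mu V ->
  exists W : set_ n,
    is_open W /\
    ssubset (sboundary (sclosure V)) W /\
    ssubset W (flow_reach phi (sboundary (sclosure V))) /\
    forall nu : vec n -> R,
      (forall x, flow_reach phi (sboundary (sclosure V)) x ->
                 sboundary (sclosure V) (phi x (- nu x))) ->
      cont_on W nu.
Proof.
move=> f_smooth phi_flow [mu_gt0 _] _ _ [_ [V_robust _]].
have f_lip := smooth_locally_lipschitz f_smooth.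
exists (flow_reach phi (sboundary (sclosure V))); split; last split; last split.
- exact: flow_reach_open f_lip phi_flow mu_gt0 V_robust.
- by move=> x x_bd; exists x, 0; rewrite (flow0 phi_flow).
- by [].
- exact: crossing_time_continuous f_lip phi_flow mu_gt0 V_robust.
Qed.
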